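(* Let $\Lambda$ be a positive definite diagonal $n\times n$ matrix, $N\ge2$, and let $Q_0,\dots,Q_N\in SO(n)$, $P_0,\dots,P_N\in\mathbb{R}^{n\times n}$, $U_0,\dots,U_{N-1}\in SO(n)$ satisfy the symmetric representation of the discrete rigid body equations: for $k=0,\dots,N-1$, $$Q_{k+1}=Q_kU_k,\qquad P_{k+1}=P_kU_k,\qquad U_k\Lambda-\Lambda U_k^T=Q_k^TP_k-P_k^TQ_k.$$ For $k=1,\dots,N$ define $\Omega_k:=Q_k^TQ_{k-1}$ and $M_k:=Q_{k-1}^TP_{k-1}-P_{k-1}^TQ_{k-1}$. Then $(Q_k,\Omega_k,M_k)$ satisfy the Moser–Veselov discrete rigid body equations: $$M_k=\Omega_k^T\Lambda-\Lambda\Omega_k\quad(k=1,\dots,N),\qquad M_{k+1}=\Omega_kM_k\Omega_k^T\quad(k=1,\dots,N-1).$$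
   Context: $SO(n)$ is the group of real orthogonal $n\times n$ matrices of determinant $1$; $A^T$ is the transpose. *)

From mathcomp Require Import all_boot all_order all_algebra.
From mathcomp Require Import reals.
Set Implicit Arguments. Unset Strict Implicit. Unset Printing Implicit Defensive.
Import Order.TTheory GRing.Theory Num.Theory.
Local Open Scope ring_scope.

Definition is_SO (R : realType) (n : nat) (A : 'M[R]_n) : Prop :=
  A^T *m A = 1%:M /\ A *m A^T = 1%:M /\ \det A = 1.

Definition pos_diag (R : realType) (n : nat) (L : 'M[R]_n) : Prop :=
  is_diag_mx L /\ forall i : 'I_n, 0 < L i i.

From mathcomp Require Import all_boot all_order all_algebra.
From mathcomp Require Import reals.
Import Order.TTheory GRing.Theory Num.Theory.
Local Open Scope ring_scope.

(* Since Q_{k+1} = Q_k U_k with Q_k orthogonal, Omega_{k+1} = U_k^T, so the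
   symmetric equation for U_k is literally the first Moser-Veselov equation.
   Right multiplication of both Q_k and P_k by U_k conjugates the skew pairing
   Q^T P - P^T Q by U_k, which is the second one. *)

Section SkewPairing.

Context {R : comNzRingType}.

Definition skew_pair {m n : nat} (A B : 'M[R]_(m, n)) : 'M[R]_n :=
  A^T *m B - B^T *m A.

Lemma trmx_mulmxr_orthogonal {m n : nat} (A : 'M[R]_(m, n)) (U : 'M[R]_n) :
  A^T *m A = 1%:M -> (A *m U)^T *m A = U^T.
Proof. by move=> AtA; rewrite trmx_mul -mulmxA AtA mulmx1. Qed.

Lemma skew_pair_mulmxr {m n : nat} (A B : 'M[R]_(m, n)) (U : 'M[R]_n) :
  skew_pair (A *m U) (B *m U) = U^T *m skew_pair A B *m U.
Proof.
by rewrite /skew_pair !trmx_mul mulmxBr mulmxBl !mulmxA -!(mulmxA U^T).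
Qed.

End SkewPairing.

Theorem mainTheorem6 (R : realType) (n N : nat) (L : 'M[R]_n)
  (Q P U : nat -> 'M[R]_n) :
  pos_diag L -> (2 <= N)%N ->
  (forall k, (k <= N)%N -> is_SO (Q k)) ->
  (forall k, (k < N)%N -> is_SO (U k)) ->
  (forall k, (k < N)%N ->
     [/\ Q k.+1 = Q k *m U k,
         P k.+1 = P k *m U k &
         U k *m L - L *m (U k)^T = (Q k)^T *m P k - (P k)^T *m Q k]) ->
  let Om := fun k => (Q k)^T *m Q k.-1 in
  let M := fun k => (Q k.-1)^T *m P k.-1 - (P k.-1)^T *m Q k.-1 in
  (forall k, (1 <= k <= N)%N -> M k = (Om k)^T *m L - L *m Om k) /\
  (forall k, (1 <= k < N)%N -> M k.+1 = Om k *m M k *m (Om k)^T).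
Proof.
move=> _ _ QSO _ step Om M.
have OmE k : (k < N)%N -> Om k.+1 = (U k)^T.
  move=> ltkN; have [QE _ _] := step k ltkN; have [QtQ _] := QSO k (ltnW ltkN).
  by rewrite /Om /= QE trmx_mulmxr_orthogonal.
split=> -[|k] //= ltkN.
  by rewrite OmE // trmxK; have [_ _ ->] := step k ltkN.
have [QE PE _] := step k (ltnW ltkN).
rewrite (OmE k (ltnW ltkN)) trmxK /M /= QE PE.
exact: (skew_pair_mulmxr (Q k) (P k) (U k)).
Qed.
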